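(* Let $C$ be a normal closed cone with nonempty interior in a real Banach space. Let $f:\operatorname{int} C \to \operatorname{int} C$ be order-preserving and homogeneous. Let $x, u \in \operatorname{int} C$ with $\|u\| = 1$ and let $0 < \theta < 1$. Then the following are equivalent: (a) $\limsup_{k\to\infty} d_H(f^k(x), u)^{1/k} \le \theta$; (b) there is $\lambda > 0$ such that $\limsup_{k\to\infty} d_T\big(f^k(x)/r_C(f)^k, \lambda u\big)^{1/k} \le \theta$; (c) there is $\lambda > 0$ such that $\limsup_{k\to\infty} \big\| f^k(x)/r_C(f)^k - \lambda u \big\|^{1/k} \le \theta$; (d) $\limsup_{k\to\infty} \big\| f^k(x)/\|f^k(x)\| - u \big\|^{1/k} \le \theta$.
   Context: A closed cone is a closed convex set $C \subset X$ with $\lambda C \subset C$ for $\lambda \ge 0$ and $C \cap (-C) = \{0\}$; $x\le y$ means $y-x\in C$. $C$ is normal if there is $\kappa > 0$ with $\|x\| \le \kappa\|y\|$ whenever $0 \le x \le y$. $f$ is order-preserving if $x\le y\Rightarrow f(x)\le f(y)$ and homogeneous if $f(tx)=tf(x)$ for $t>0$. For $x,y \in \operatorname{int} C$: $M(x/y) := \inf\{\beta>0 : x \le \beta y\}$, $m(x/y) := \sup\{\alpha>0 : \alpha y \le x\}$; Thompson's metric $d_T(x,y) = \max\{\log M(x/y), \log M(y/x)\}$; Hilbert's projective metric $d_H(x,y) = \log(M(x/y)/m(x/y))$. The cone spectral radius is $r_C(f) = \limsup_{k\to\infty}\|f^k(y)\|^{1/k}$ for any $y \in \operatorname{int} C$.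 *)

From mathcomp Require Import all_boot all_order all_algebra.
From mathcomp Require Import all_classical all_reals all_analysis.
Set Implicit Arguments. Unset Strict Implicit. Unset Printing Implicit Defensive.
Import Order.TTheory GRing.Theory Num.Theory.
Import numFieldNormedType.Exports.
Local Open Scope classical_set_scope.
Local Open Scope ring_scope.

Section Cones.
Variables (R : realType) (X : normedModType R).

Definition closed_cone (C : set X) : Prop :=
  [/\ closed C,
      (forall x y (t : R), C x -> C y -> 0 <= t <= 1 -> C (t *: x + (1 - t) *: y)),
      (forall (l : R) x, 0 <= l -> C x -> C (l *: x)) &
      (forall x, C x -> C (- x) -> x = 0)].

Definition cone_le (C : set X) (x y : X) : Prop := C (y - x).

Definition normal_cone (C : set X) : Prop :=
  exists kappa : R, 0 < kappa /\
    forall x y, cone_le C 0 x -> cone_le C x y -> `|x| <= kappa * `|y|.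

Definition order_preserving (C : set X) (f : X -> X) : Prop :=
  forall x y, interior C x -> interior C y -> cone_le C x y -> cone_le C (f x) (f y).

Definition homogeneous (C : set X) (f : X -> X) : Prop :=
  forall (t : R) x, interior C x -> 0 < t -> f (t *: x) = t *: f x.

Definition Mxy (C : set X) (x y : X) : R :=
  inf [set b : R | 0 < b /\ cone_le C x (b *: y)].
Definition mxy (C : set X) (x y : X) : R :=
  sup [set a : R | 0 < a /\ cone_le C (a *: y) x].

Definition thompson (C : set X) (x y : X) : R :=
  Num.max (ln (Mxy C x y)) (ln (Mxy C y x)).
Definition hilbert (C : set X) (x y : X) : R :=
  ln (Mxy C x y / mxy C x y).

Definition limsup_root (a : nat -> R) : \bar R :=
  limn_esup (fun k => ((a k) `^ (k%:R)^-1)%:E).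

(* cone spectral radius r_C(f) = limsup ||f^k(y)||^{1/k}, y an (arbitrarily chosen)
   interior point of C *)
Definition cone_spectral_radius (C : set X) (f : X -> X) : \bar R :=
  limsup_root (fun k => `|iter k f (xget 0 (interior C))|).

End Cones.

From mathcomp Require Import all_boot all_order all_algebra.
From mathcomp Require Import all_classical all_reals all_analysis.
From mathcomp Require Import ring lra.
Import Order.TTheory GRing.Theory Num.Theory.
Import numFieldNormedType.Exports.
Local Open Scope classical_set_scope.
Local Open Scope ring_scope.
Set Implicit Arguments. Unset Strict Implicit. Unset Printing Implicit Defensive.

(* Write y_k = f^k(x). If d_H(y_k, u) decays at rate theta < 1, then, f being
   nonexpansive for d_H, d_H(f u, u) <= d_H(y_k, u) + d_H(y_(k+1), u) tends to 0, so
   f u = mu u; normality then gives r_C(f) = mu. The ratios m(y_k/u)/mu^k increase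
   and M(y_k/u)/mu^k decrease, and for any lambda between them
   d_T(y_k/mu^k, lambda u) <= d_H(y_k, u), which is (b). Near lambda u the Thompson
   metric controls the norm (normality again), giving (c); normalizing gives (d); and
   since u is an interior point, a small distance between y_k/|y_k| and u bounds
   d_H(y_k, u) linearly, which closes the cycle. The limsups are handled through the
   condition "a_k <= theta'^k eventually, for every theta' > theta", which, unlike
   the limsup itself, is visibly stable under multiplication by constants. *)

(** * Geometric decay *)

Section LimsupRoot.
Variable R : realType.
Implicit Types (a b : nat -> R) (theta c : R).

Lemma limn_esup_le_near (u : nat -> \bar R) (l : \bar R) :
  (\forall k \near \oo, u k <= l)%E -> (limn_esup u <= l)%E.
Proof.
move=> [N _ uNl]; apply: (le_trans (ereal_inf_lbound _)).
  by exists [set k | (N <= k)%N]; first exists N.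
by apply: ge_ereal_sup => _ [k Nk <-]; apply: uNl.
Qed.

Lemma limn_esup_ge_near (u : nat -> \bar R) (l : \bar R) :
  (\forall k \near \oo, l <= u k)%E -> (l <= limn_esup u)%E.
Proof.
move=> [N _ uNl]; apply: le_ereal_inf_tmp => _ [V [M _ MV] <-].
apply: (le_trans (uNl (maxn N M) (leq_maxl _ _))).
by apply: ereal_sup_ubound; exists (maxn N M) => //; apply: MV; rewrite /= leq_maxr.
Qed.

Lemma limn_esup_lt_near (u : nat -> \bar R) (l : \bar R) :
  (limn_esup u < l)%E -> \forall k \near \oo, (u k < l)%E.
Proof.
move=> /ereal_inf_lt [_ [V [N _ NV] <-]] supl; exists N => // k Nk.
by apply: le_lt_trans supl; apply: ereal_sup_ubound; exists k => //; apply: NV.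
Qed.

Lemma powR_invnK (t : R) (k : nat) : 0 <= t -> (0 < k)%N -> (t `^ k%:R^-1) ^+ k = t.
Proof.
move=> t0 k0; rewrite -powR_mulrn ?powR_ge0 // -powRrM mulVf ?powRr1 //.
by rewrite pnatr_eq0 -lt0n.
Qed.

Lemma powR_invn_le (t s : R) (k : nat) : 0 <= t -> 0 <= s -> (0 < k)%N ->
  (t `^ k%:R^-1 <= s) = (t <= s ^+ k).
Proof.
by move=> t0 s0 k0; rewrite -(ler_pXn2r k0) ?nnegrE ?powR_ge0 // powR_invnK.
Qed.

Lemma le_powR_invn (t s : R) (k : nat) : 0 <= t -> 0 <= s -> (0 < k)%N ->
  (s <= t `^ k%:R^-1) = (s ^+ k <= t).
Proof.
by move=> t0 s0 k0; rewrite -(ler_pXn2r k0) ?nnegrE ?powR_ge0 // powR_invnK.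
Qed.

Lemma near_expr_le q c : 0 < c -> 0 <= q < 1 -> \forall k \near \oo, q ^+ k <= c.
Proof.
move=> c0 /andP[q0 q1]; near=> k; rewrite -[q ^+ k]ger0_norm ?exprn_ge0 //.
by near: k; apply: cvgr0_norm_le c0; apply: cvg_expr; rewrite ger0_norm.
Unshelve. all: by end_near. Qed.

Definition geom_decay a theta :=
  forall theta', theta < theta' -> \forall k \near \oo, a k <= theta' ^+ k.

Lemma geom_decay_le a b theta : (forall k, a k <= b k) -> geom_decay b theta ->
  geom_decay a theta.
Proof. by move=> ab db theta' /db; apply: filterS => k; apply: le_trans. Qed.

Lemma geom_decay_bigO a b theta c : 0 < theta -> 0 < c -> geom_decay b theta ->
  (\forall k \near \oo, a k <= c * b k) -> geom_decay a theta.
Proof.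
move=> th0 c0 db ab theta' th'.
pose t := (theta + theta') / 2.
have tth : theta < t by rewrite /t; lra.
have tth' : t < theta' by rewrite /t; lra.
near=> k.
have abk : a k <= c * b k by near: k.
have bk : b k <= t ^+ k by near: k; apply: db.
have : (t / theta') ^+ k <= c^-1.
  near: k; apply: near_expr_le; first by rewrite invr_gt0.
  by rewrite divr_ge0 /= ?ler_pdivrMr ?ltr_pdivrMr ?mul1r //; lra.
rewrite expr_div_n ler_pdivrMr ?exprn_gt0 //; last by lra.
move=> tk; apply: (le_trans abk).
by rewrite -(mulVKf (lt0r_neq0 c0) (theta' ^+ k)) ler_pM2l // (le_trans bk).
Unshelve. all: by end_near. Qed.

Lemma geom_decay_near_le a theta c : 0 < theta < 1 -> 0 < c -> geom_decay a theta ->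
  \forall k \near \oo, a k <= c.
Proof.
move=> /andP[th0 th1] c0 da; pose t := (theta + 1) / 2.
near=> k; apply: (@le_trans _ _ (t ^+ k)).
  by near: k; apply: da; rewrite /t; lra.
by near: k; apply: near_expr_le => //; rewrite /t; apply/andP; split; lra.
Unshelve. all: by end_near. Qed.

Lemma limsup_rootP a theta : 0 < theta -> (forall k, 0 <= a k) ->
  (limsup_root a <= theta%:E)%E <-> geom_decay a theta.
Proof.
move=> th0 a0; split=> [a_le theta' th'|da].
  have : (limsup_root a < theta'%:E)%E by apply: le_lt_trans a_le _; rewrite lte_fin.
  move=> /limn_esup_lt_near ev; near=> k.
  have k0 : (0 < k)%N by near: k.
  rewrite -powR_invn_le ?(ltW (lt_trans th0 th')) //.
  by apply: ltW; rewrite -lte_fin; near: k.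
apply/lee_addgt0Pr => e e0; apply: limn_esup_le_near.
have the : 0 < theta + e by rewrite addr_gt0.
near=> k; have k0 : (0 < k)%N by near: k.
rewrite -EFinD lee_fin powR_invn_le ?(ltW the) //.
by near: k; apply: da; rewrite ltrDl.
Unshelve. all: by end_near. Qed.

Lemma limsup_root_bounds a (A B c D : R) : 0 < A -> 0 < B -> 0 < c -> 0 < D ->
  (forall k, A * c ^+ k <= a k) -> (forall k, a k <= B * D ^+ k) ->
  c <= fine (limsup_root a) <= D.
Proof.
move=> A0 B0 c0 D0 lo hi.
have a0 k : 0 <= a k.
  by apply: le_trans (lo k); rewrite mulr_ge0 ?exprn_ge0 ?(ltW A0) ?(ltW c0).
have up : (limsup_root a <= D%:E)%E.
  apply/limsup_rootP => //; apply: (geom_decay_bigO (b := fun k => D ^+ k) D0 B0).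
    move=> D' DD'; have D'0 := lt_trans D0 DD'.
    by near=> k; apply: lerXn2r; rewrite ?nnegrE ?(ltW D0) ?(ltW D'0) ?(ltW DD').
  by near=> k; apply: hi.
have low t : 0 < t < c -> (t%:E <= limsup_root a)%E.
  move=> /andP[t0 tc]; apply: limn_esup_ge_near; near=> k.
  have k0 : (0 < k)%N by near: k.
  rewrite lee_fin le_powR_invn ?(ltW t0) //.
  apply: le_trans (lo k); have : (t / c) ^+ k <= A.
    by near: k; apply: near_expr_le => //; rewrite divr_ge0 ?(ltW t0) ?(ltW c0) //= ltr_pdivrMr ?mul1r.
  by rewrite expr_div_n ler_pdivrMr ?exprn_gt0 // mulrC.
have c2 : 0 < c / 2 < c by apply/andP; split; lra.
move: up (low _ c2); case E : (limsup_root a) => [l| |] //=; rewrite !lee_fin => lD c2l.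
rewrite lD andbT leNgt; apply/negP => lc.
have : (l + c) / 2 <= l by rewrite -lee_fin -E low //; apply/andP; split; lra.
lra.
Unshelve. all: by end_near. Qed.

End LimsupRoot.

(** * Cones and the gauges M and m *)

Section ClosedSupInf.
Variable R : realType.
Implicit Types S A : set R.

Lemma closed_sup_mem S A : closed S -> A `<=` S -> A !=set0 -> has_ubound A -> S (sup A).
Proof. by move=> clS AS A0 ubA; apply/clS/(closureS AS)/closure_sup. Qed.

Lemma closed_inf_mem S A : closed S -> A `<=` S -> A !=set0 -> has_lbound A -> S (inf A).
Proof.
move=> clS AS A0 lbA; apply: (closed_sup_mem (S := -%R @^-1` S)).
- by apply: preimage_closed => // x _; apply: oppr_continuous.
- by move=> _ [a Aa <-]; rewrite /= opprK; apply: AS.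
- exact/nonemptyN.
- exact/has_lb_ubN.
Qed.

End ClosedSupInf.

Section ConeOrder.
Variables (R : realType) (X : normedModType R) (C : set X).
Hypothesis coneC : closed_cone C.

Lemma coneZ l x : 0 <= l -> C x -> C (l *: x).
Proof. by case: coneC => _ _ + _; apply. Qed.

Lemma coneD x y : C x -> C y -> C (x + y).
Proof.
case: coneC => _ convC _ _ Cx Cy.
have half : 0 <= (2^-1 : R) <= 1 by apply/andP; split; lra.
have := coneZ (_ : 0 <= 2) (convC _ _ _ Cx Cy half).
rewrite (_ : 1 - 2^-1 = 2^-1 :> R); last by lra.
by rewrite -scalerDr scalerA mulfV ?pnatr_eq0 // scale1r; apply.
Qed.

Lemma cone_antisym x : C x -> C (- x) -> x = 0.
Proof. by case: coneC => _ _ _; apply. Qed.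

Lemma cone_lexx x : C x -> cone_le C x x.
Proof. by move=> Cx; rewrite /cone_le subrr -(scale0r x); apply: coneZ. Qed.

Lemma cone_le_trans x y z : cone_le C x y -> cone_le C y z -> cone_le C x z.
Proof. by move=> Cyx Czy; have := coneD Czy Cyx; rewrite addrA subrK. Qed.

Lemma cone_le_anti x y : cone_le C x y -> cone_le C y x -> x = y.
Proof.
by move=> Cyx Cxy; apply/eqP; rewrite eq_sym -subr_eq0 (cone_antisym Cyx) // opprB.
Qed.

Lemma cone_leZ2l t x y : 0 <= t -> cone_le C x y -> cone_le C (t *: x) (t *: y).
Proof. by rewrite /cone_le -scalerBr; apply: coneZ. Qed.

Lemma cone_leZ2r a b v : C v -> a <= b -> cone_le C (a *: v) (b *: v).
Proof. by move=> Cv ab; rewrite /cone_le -scalerBl; apply: coneZ; rewrite ?subr_ge0. Qed.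

Lemma cone_leZ2r_le a b v : C v -> v != 0 -> cone_le C (a *: v) (b *: v) -> a <= b.
Proof.
move=> Cv v0; rewrite /cone_le -scalerBl => Cbav; rewrite leNgt; apply/negP => ba.
have : (b - a) *: v = 0.
  apply: cone_antisym Cbav _; rewrite -scaleNr opprB.
  by apply: coneZ Cv; rewrite subr_ge0 (ltW ba).
by move/eqP; rewrite scaler_eq0 (negbTE v0) orbF subr_eq0 (lt_eqF ba).
Qed.

Lemma cone_le_invZl a v w : 0 < a -> cone_le C (a *: v) w -> cone_le C v (a^-1 *: w).
Proof.
move=> a0; have a0' : 0 <= a^-1 by rewrite invr_ge0 (ltW a0).
by move=> /(cone_leZ2l a0'); rewrite scalerA mulVf ?gt_eqF // scale1r.
Qed.

Lemma cone_le_invZr a v w : 0 < a -> cone_le C w (a *: v) -> cone_le C (a^-1 *: w) v.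
Proof.
move=> a0; have a0' : 0 <= a^-1 by rewrite invr_ge0 (ltW a0).
by move=> /(cone_leZ2l a0'); rewrite scalerA mulVf ?gt_eqF // scale1r.
Qed.

Lemma interior_ball y : interior C y ->
  exists2 e : R, 0 < e & forall w, `|w| < e -> C (y + w).
Proof.
move=> /nbhs_ballP [e e0 ballC]; exists e => // w we; apply: ballC.
by rewrite -ball_normE /ball_ /= opprD addrA subrr add0r normrN.
Qed.

Lemma interiorZ t y : 0 < t -> interior C y -> interior C (t *: y).
Proof.
move=> t0 /interior_ball [e e0 ballC]; apply/nbhs_ballP.
exists (t * e) => [|z]; first by rewrite /= mulr_gt0.
rewrite -ball_normE /ball_ /= => tyz.
have -> : z = t *: (y + (t^-1 *: z - y)).
  by rewrite addrC subrK scalerA mulfV ?gt_eqF // scale1r.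
apply: coneZ (ltW t0) (ballC _ _).
rewrite -(ltr_pM2l t0) -[t in t * _]ger0_norm ?(ltW t0) // -normrZ.
by rewrite scalerBr scalerA mulfV ?gt_eqF // scale1r distrC.
Qed.

Lemma exists_cone_le_scale v y : interior C v -> exists2 b : R, 0 < b & cone_le C y (b *: v).
Proof.
move=> /interior_ball [e e0 ballC]; pose t := e / (`|y| + 1).
have y1 : 0 < `|y| + 1 by rewrite ltr_pwDr.
have t0 : 0 < t by rewrite divr_gt0.
have : `|- (t *: y)| < e.
  by rewrite normrN normrZ gtr0_norm // /t mulrAC ltr_pdivrMr // ltr_pM2l // ltrDl.
have t0' : 0 <= t^-1 by rewrite invr_ge0 (ltW t0).
move=> /ballC /(coneZ t0'); rewrite scalerDr scalerN scalerA mulVf ?gt_eqF // scale1r => Cty.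
by exists t^-1; rewrite ?invr_gt0.
Qed.

Lemma exists_scale_cone_le v y : interior C v -> interior C y ->
  exists2 a : R, 0 < a & cone_le C (a *: v) y.
Proof.
move=> Iv Iy; have [b b0 /(cone_le_invZr b0) vby] := exists_cone_le_scale v Iy.
by exists b^-1; rewrite ?invr_gt0.
Qed.

Lemma closed_cone_le_scale y v : closed [set b : R | cone_le C y (b *: v)].
Proof.
case: coneC => clC _ _ _.
apply: (preimage_closed (f := fun b : R => b *: v - y)) => // b _.
by apply: cvgB; [exact: scalel_continuous | exact: cvg_cst].
Qed.

Lemma closed_cone_le_scale_ge y v : closed [set a : R | cone_le C (a *: v) y].
Proof.
case: coneC => clC _ _ _.
apply: (preimage_closed (f := fun a : R => y - a *: v)) => // a _.
by apply: cvgB; [exact: cvg_cst | exact: scalel_continuous].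
Qed.

(* In the zero space the cone {0} has 0 as an interior point. *)
Hypothesis X_nontrivial : exists v : X, v != 0.

Lemma interior_neq0 y : interior C y -> y != 0.
Proof.
move=> Iy; apply/eqP => y0; move: Iy; rewrite y0 => /interior_ball [e e0 ballC].
have [w w0] := X_nontrivial; have w_gt0 : 0 < `|w| by rewrite normr_gt0.
set t := e / 2 / `|w|.
have t0 : 0 < t by rewrite !divr_gt0.
have tw : `|t *: w| < e by rewrite normrZ gtr0_norm // divfK ?gt_eqF //; lra.
have : t *: w = 0.
  apply: cone_antisym; first by have := ballC _ tw; rewrite add0r.
  by have := ballC (- (t *: w)); rewrite add0r normrN; apply.
by move/eqP; rewrite scaler_eq0 (gt_eqF t0) (negbTE w0).
Qed.

Lemma Mxy_le y v b : 0 < b -> cone_le C y (b *: v) -> Mxy C y v <= b.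
Proof. by move=> b0 ybv; apply: ge_inf; [exists 0 => z [/ltW] | split]. Qed.

Lemma mxy_ge y v a : interior C v -> 0 < a -> cone_le C (a *: v) y -> a <= mxy C y v.
Proof.
move=> Iv a0 avy; have [b b0 ybv] := exists_cone_le_scale y Iv.
apply: sup_upper_bound; last by split.
split; first by exists a.
exists b => c [c0 cvy]; apply: cone_leZ2r_le (nbhs_singleton Iv) (interior_neq0 Iv) _.
exact: cone_le_trans cvy ybv.
Qed.

Lemma mxy_le_Mxy y v : interior C y -> interior C v -> mxy C y v <= Mxy C y v.
Proof.
move=> Iy Iv; apply: lb_le_inf => [|b [b0 ybv]].
  by have [b b0 ybv] := exists_cone_le_scale y Iv; exists b.
apply: ge_sup => [|a [a0 avy]]; first by have [a a0 avy] := exists_scale_cone_le Iv Iy; exists a.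
exact: cone_leZ2r_le (nbhs_singleton Iv) (interior_neq0 Iv) (cone_le_trans avy ybv).
Qed.

Lemma mxy_gt0 y v : interior C y -> interior C v -> 0 < mxy C y v.
Proof.
by move=> Iy Iv; have [a a0 /(mxy_ge Iv a0)] := exists_scale_cone_le Iv Iy; apply: lt_le_trans.
Qed.

Lemma Mxy_gt0 y v : interior C y -> interior C v -> 0 < Mxy C y v.
Proof. by move=> Iy Iv; apply: lt_le_trans (mxy_gt0 Iy Iv) (mxy_le_Mxy Iy Iv). Qed.

Lemma cone_le_Mxy y v : interior C v -> cone_le C y (Mxy C y v *: v).
Proof.
move=> Iv; have := closed_inf_mem (closed_cone_le_scale (y := y) (v := v)); apply => [b []//| |].
  by have [b b0 ybv] := exists_cone_le_scale y Iv; exists b.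
by exists 0 => b [/ltW].
Qed.

Lemma mxy_cone_le y v : interior C y -> interior C v -> cone_le C (mxy C y v *: v) y.
Proof.
move=> Iy Iv; have := closed_sup_mem (closed_cone_le_scale_ge (y := y) (v := v)); apply => [a []//| |].
  by have [a a0 avy] := exists_scale_cone_le Iv Iy; exists a.
have [b b0 ybv] := exists_cone_le_scale y Iv; exists b => a [a0 avy].
exact: cone_leZ2r_le (nbhs_singleton Iv) (interior_neq0 Iv) (cone_le_trans avy ybv).
Qed.

Lemma hilbert_ge0 y v : interior C y -> interior C v -> 0 <= hilbert C y v.
Proof.
move=> Iy Iv; apply: ln_ge0.
by rewrite ler_pdivlMr ?mxy_gt0 // mul1r mxy_le_Mxy.
Qed.

Lemma hilbert_le_ln y v a b : interior C y -> interior C v -> 0 < a ->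
  cone_le C (a *: v) y -> cone_le C y (b *: v) -> hilbert C y v <= ln (b / a).
Proof.
move=> Iy Iv a0 avy ybv.
have ab : a <= b := cone_leZ2r_le (nbhs_singleton Iv) (interior_neq0 Iv) (cone_le_trans avy ybv).
have b0 : 0 < b := lt_le_trans a0 ab.
have m0 := mxy_gt0 Iy Iv.
rewrite /hilbert ler_ln ?posrE ?divr_gt0 ?Mxy_gt0 //.
apply: (le_trans (ler_wpM2r _ (Mxy_le b0 ybv))); first by rewrite invr_ge0 (ltW m0).
by rewrite ler_pM2l // lef_pV2 ?posrE // mxy_ge.
Qed.

Lemma hilbert_le0_eq y v : interior C y -> interior C v -> hilbert C y v <= 0 ->
  y = Mxy C y v *: v.
Proof.
move=> Iy Iv dH0; have m0 := mxy_gt0 Iy Iv.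
have Mm : Mxy C y v = mxy C y v.
  apply/le_anti; rewrite mxy_le_Mxy // andbT leNgt; apply/negP => mM.
  by move: dH0; rewrite leNgt ln_gt0 // ltr_pdivlMr // mul1r.
by apply: cone_le_anti (cone_le_Mxy y Iv) _; rewrite Mm; apply: mxy_cone_le.
Qed.

Lemma thompsonC z w : thompson C z w = thompson C w z.
Proof. by rewrite /thompson maxC. Qed.

Lemma thompson_ge0 z w : interior C z -> interior C w -> 0 <= thompson C z w.
Proof.
move=> Iz Iw; have M1 := Mxy_gt0 Iz Iw; have M2 := Mxy_gt0 Iw Iz.
have : cone_le C (1 *: z) ((Mxy C z w * Mxy C w z) *: z).
  rewrite scale1r -scalerA; apply: cone_le_trans (cone_le_Mxy z Iw) _.
  exact: cone_leZ2l (ltW M1) (cone_le_Mxy w Iz).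
move=> /(cone_leZ2r_le (nbhs_singleton Iz) (interior_neq0 Iz)) /ln_ge0.
rewrite lnM ?posrE // /thompson le_max => lnMM.
by case: (leP 0 (ln (Mxy C z w))) => //= lnM1; lra.
Qed.

Lemma cone_le_expR_thompson z w : interior C z -> interior C w ->
  cone_le C z (expR (thompson C z w) *: w).
Proof.
move=> Iz Iw; apply: cone_le_trans (cone_le_Mxy z Iw) (cone_leZ2r (nbhs_singleton Iw) _).
by rewrite -{1}(lnK (Mxy_gt0 Iz Iw)) ler_expR le_max lexx.
Qed.

Lemma thompson_le_ln z v p q lam : interior C z -> interior C v -> 0 < p ->
  p <= lam -> lam <= q -> cone_le C (p *: v) z -> cone_le C z (q *: v) ->
  thompson C z (lam *: v) <= ln (q / p).
Proof.
move=> Iz Iv p0 plam lamq pvz zqv.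
have lam0 := lt_le_trans p0 plam; have q0 := lt_le_trans lam0 lamq.
have Ilv := interiorZ lam0 Iv.
have M1 : Mxy C z (lam *: v) <= q / lam.
  by apply: Mxy_le; rewrite ?divr_gt0 // scalerA mulfVK ?gt_eqF.
have M2 : Mxy C (lam *: v) z <= lam / p.
  apply: Mxy_le; first by rewrite divr_gt0.
  have -> : lam *: v = (lam / p) *: (p *: v) by rewrite scalerA mulfVK ?lt0r_neq0.
  by apply: cone_leZ2l pvz; rewrite divr_ge0 ?(ltW lam0) ?(ltW p0).
rewrite /thompson ge_max !ler_ln ?posrE ?divr_gt0 ?Mxy_gt0 //.
apply/andP; split; first by apply: le_trans M1 _; rewrite ler_pM2l // lef_pV2 ?posrE.
by apply: le_trans M2 _; rewrite ler_pM2r ?invr_gt0.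
Qed.

Lemma ball_cone_scale u rho d w : 0 < rho -> (forall w, `|w| < rho -> C (u + w)) ->
  0 <= d -> 2 * `|w| <= d * rho -> C (d *: u + w).
Proof.
move=> rho0 ballC d0 wd; have w0 := normr_ge0 w.
have [d_eq0|d_neq0] := eqVneq d 0.
  have /eqP -> : w == 0 by rewrite -normr_le0; move: wd; rewrite d_eq0 mul0r; lra.
  have := ballC 0; rewrite normr0 addr0 => /(_ rho0) Cu.
  by rewrite d_eq0 scale0r addr0 -(scale0r u); apply: coneZ Cu.
have {d_neq0}d_gt0 : 0 < d by rewrite lt_def d_neq0.
have -> : d *: u + w = d *: (u + d^-1 *: w) by rewrite scalerDr scalerKV ?gt_eqF.
apply: coneZ (ltW d_gt0) (ballC _ _).
have rd : 0 < rho * d := mulr_gt0 rho0 d_gt0.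
by rewrite normrZ gtr0_norm ?invr_gt0 // mulrC ltr_pdivrMr //; lra.
Qed.

(* With v = y/|y| and d = 2|v - u|/rho one has (1 - d) u <= v <= (1 + d) u. *)
Lemma hilbert_le_normalize_sub y u rho : interior C y -> interior C u -> 0 < rho ->
  (forall w, `|w| < rho -> C (u + w)) -> `| `|y|^-1 *: y - u| <= rho / 4 ->
  hilbert C y u <= 8 / rho * `| `|y|^-1 *: y - u|.
Proof.
move=> Iy Iu rho0 ballC; set v := `|y|^-1 *: y; set e := `|v - u| => e_small.
have e0 : 0 <= e := normr_ge0 _.
have y0 : 0 < `|y| by rewrite normr_gt0 interior_neq0.
pose d := 2 * e / rho.
have d0 : 0 <= d by rewrite divr_ge0 ?mulr_ge0 ?(ltW rho0).
have d_half : d <= 2^-1 by rewrite ler_pdivrMr //; lra.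
have Cdu w : `|w| <= e -> C (d *: u + w).
  by move=> we; apply: (ball_cone_scale rho0 ballC d0); rewrite /d divfK ?gt_eqF //; lra.
have yv : y = `|y| *: v by rewrite scalerA mulfV ?gt_eqF // scale1r.
have lo : cone_le C ((`|y| * (1 - d)) *: u) y.
  rewrite {2}yv -scalerA; apply: cone_leZ2l (ltW y0) _.
  by rewrite /cone_le scalerBl scale1r opprB addrCA; apply: Cdu.
have hi : cone_le C y ((`|y| * (1 + d)) *: u).
  rewrite {1}yv -scalerA; apply: cone_leZ2l (ltW y0) _.
  by rewrite /cone_le scalerDl scale1r [u + _]addrC -addrA; apply: Cdu; rewrite distrC.
have a0 : 0 < `|y| * (1 - d) by rewrite mulr_gt0 //; lra.
apply: le_trans (hilbert_le_ln Iy Iu a0 lo hi) _.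
rewrite (_ : _ / _ = 1 + 2 * d / (1 - d)); last by field; rewrite gt_eqF //; lra.
apply: le_trans (le_ln1Dx _) _; first by rewrite (lt_le_trans (_ : -1 < 0)) ?divr_ge0 //; lra.
rewrite (_ : 8 / rho * e = 4 * d); last by rewrite /d; field; rewrite gt_eqF.
by rewrite ler_pdivrMr; [nra | lra].
Qed.

End ConeOrder.

Section Normalize.
Variables (R : realType) (X : normedModType R).

Lemma normalizeZ (s : R) (y : X) : 0 < s -> `|s *: y|^-1 *: (s *: y) = `|y|^-1 *: y.
Proof.
by move=> s0; rewrite normrZ gtr0_norm // scalerA invfM mulrAC mulVf ?gt_eqF // mul1r.
Qed.

Lemma normalize_sub_le (z u : X) (lam : R) : `|u| = 1 -> 0 < lam ->
  `|z - lam *: u| <= lam / 2 -> `| `|z|^-1 *: z - u| <= 4 / lam * `|z - lam *: u|.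
Proof.
move=> u1 lam0; set e := `|z - lam *: u| => e_small.
have e0 : 0 <= e := normr_ge0 _.
have lamu : `|lam *: u| = lam by rewrite normrZ u1 mulr1 gtr0_norm.
have dist : `| `|z| - lam| <= e by rewrite -lamu ler_dist_dist.
have z_ge : lam - e <= `|z| by move: dist; rewrite ler_norml => /andP[+ _]; lra.
have z0 : 0 < `|z| by lra.
have -> : `|z|^-1 *: z - u = `|z|^-1 *: (z - `|z| *: u).
  by rewrite scalerBr scalerA mulVf ?gt_eqF // scale1r.
have zu : `|z - `|z| *: u| <= 2 * e.
  rewrite (_ : z - `|z| *: u = (z - lam *: u) + (lam - `|z|) *: u); last first.
    by rewrite scalerBl addrA subrK.
  apply: (le_trans (ler_normD _ _)); rewrite normrZ u1 mulr1 [`|lam - _|]distrC.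
  rewrite -/e; lra.
rewrite normrZ gtr0_norm ?invr_gt0 // mulrC ler_pdivrMr //.
apply: le_trans zu _; rewrite (_ : 2 * e = 4 / lam * e * (lam / 2)); last first.
  by field; rewrite lt0r_neq0.
by rewrite ler_wpM2l ?mulr_ge0 ?invr_ge0 ?(ltW lam0) //; lra.
Qed.

End Normalize.

Section NormalCone.
Variables (R : realType) (X : normedModType R) (C : set X) (kappa : R).
Hypotheses (coneC : closed_cone C) (X_nontrivial : exists v : X, v != 0).
Hypothesis kappa0 : 0 < kappa.
Hypothesis normalC : forall x y, cone_le C 0 x -> cone_le C x y -> `|x| <= kappa * `|y|.

Lemma normal_cone_norm_le x y : C x -> cone_le C x y -> `|x| <= kappa * `|y|.
Proof. by move=> Cx; apply: normalC; rewrite /cone_le subr0. Qed.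

Lemma norm_sub_le_thompson z w : interior C z -> interior C w -> thompson C z w <= 2^-1 ->
  `|z - w| <= (3 * kappa + 1) * `|w| * thompson C z w.
Proof.
(* With E = expR t: E^-1 w <= z <= E w, E - E^-1 <= 3 t and 1 - E^-1 <= t. *)
move=> Iz Iw; set t := thompson C z w => t_small.
have t0 : 0 <= t := thompson_ge0 coneC X_nontrivial Iz Iw.
set E := expR t; have E0 : 0 < E := expR_gt0 t.
have zEw : cone_le C z (E *: w) := cone_le_expR_thompson coneC X_nontrivial Iz Iw.
have Fwz : cone_le C (E^-1 *: w) z.
  have := cone_le_expR_thompson coneC X_nontrivial Iw Iz.
  by rewrite thompsonC -/t -/E; apply: cone_le_invZr.
have F_ge : 1 - t <= E^-1 by rewrite -expRN; apply: expR_ge1Dx.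
have E_ge : 1 + t <= E := expR_ge1Dx t.
have EF : E * E^-1 = 1 by rewrite mulfV ?gt_eqF.
have E_le : E <= 1 + 2 * t by nra.
have EF0 : 0 <= E - E^-1 by nra.
have normC : `|z - E^-1 *: w| <= kappa * ((E - E^-1) * `|w|).
  rewrite -(ger0_norm EF0) -normrZ; apply: normal_cone_norm_le Fwz _.
  by rewrite /cone_le scalerBl opprB addrA subrK.
have -> : z - w = (z - E^-1 *: w) - (1 - E^-1) *: w.
  by rewrite scalerBl scale1r opprB addrA subrK.
apply: (le_trans (ler_normB _ _)); rewrite normrZ ger0_norm; last by nra.
have w0 := normr_ge0 w.
have : kappa * ((E - E^-1) * `|w|) <= kappa * (3 * t * `|w|).
  by rewrite ler_pM2l // ler_wpM2r //; lra.
have : (1 - E^-1) * `|w| <= t * `|w| by rewrite ler_wpM2r //; lra.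
lra.
Qed.

End NormalCone.

(** * Order-preserving homogeneous maps *)

Section OrderPreservingMaps.
Variables (R : realType) (X : normedModType R) (C : set X) (f : X -> X).
Hypotheses (coneC : closed_cone C) (X_nontrivial : exists v : X, v != 0).
Hypotheses (f_interior : forall y, interior C y -> interior C (f y))
  (f_mono : order_preserving C f) (f_hom : homogeneous C f).

Lemma iter_interior k y : interior C y -> interior C (iter k f y).
Proof. by move=> Iy; elim: k => //= k; apply: f_interior. Qed.

Lemma cone_le_scale_f a v y : interior C v -> interior C y -> 0 < a ->
  cone_le C (a *: v) y -> cone_le C (a *: f v) (f y).
Proof. by move=> Iv Iy a0 /(f_mono (interiorZ coneC a0 Iv) Iy); rewrite f_hom. Qed.

Lemma cone_le_f_scale b v y : interior C v -> interior C y -> 0 < b ->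
  cone_le C y (b *: v) -> cone_le C (f y) (b *: f v).
Proof. by move=> Iv Iy b0 /(f_mono Iy (interiorZ coneC b0 Iv)); rewrite f_hom. Qed.

Lemma cone_le_scale_iter a c v y : interior C v -> interior C y -> 0 < a -> 0 < c ->
  cone_le C (c *: v) (f v) -> cone_le C (a *: v) y ->
  forall k, cone_le C ((a * c ^+ k) *: v) (iter k f y).
Proof.
move=> Iv Iy a0 c0 cv_fv avy; elim=> [|k IHk]; first by rewrite mulr1.
have ack : 0 < a * c ^+ k by rewrite mulr_gt0 ?exprn_gt0.
rewrite iterS exprSr mulrA -scalerA.
exact: (cone_le_trans coneC (cone_leZ2l coneC (ltW ack) cv_fv)
  (cone_le_scale_f Iv (iter_interior k Iy) ack IHk)).
Qed.

Lemma cone_le_iter_scale b D v y : interior C v -> interior C y -> 0 < b -> 0 < D ->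
  cone_le C (f v) (D *: v) -> cone_le C y (b *: v) ->
  forall k, cone_le C (iter k f y) ((b * D ^+ k) *: v).
Proof.
move=> Iv Iy b0 D0 fv_Dv ybv; elim=> [|k IHk]; first by rewrite mulr1.
have bDk : 0 < b * D ^+ k by rewrite mulr_gt0 ?exprn_gt0.
rewrite iterS exprSr mulrA -scalerA.
exact: (cone_le_trans coneC (cone_le_f_scale Iv (iter_interior k Iy) bDk IHk)
  (cone_leZ2l coneC (ltW bDk) fv_Dv)).
Qed.

(* f is nonexpansive for d_H, and d_H satisfies the triangle inequality. *)
Lemma hilbert_f_le y u : interior C y -> interior C u ->
  hilbert C (f u) u <= hilbert C y u + hilbert C (f y) u.
Proof.
move=> Iy Iu; have Ify := f_interior Iy.
have m0 := mxy_gt0 coneC X_nontrivial Iy Iu; have M0 := Mxy_gt0 coneC X_nontrivial Iy Iu.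
have m1 := mxy_gt0 coneC X_nontrivial Ify Iu; have M1 := Mxy_gt0 coneC X_nontrivial Ify Iu.
have fu_le : cone_le C (f u) ((Mxy C (f y) u / mxy C y u) *: u).
  rewrite mulrC -scalerA; apply: (cone_le_invZl coneC m0).
  exact: (cone_le_trans coneC (cone_le_scale_f Iu Iy m0 (mxy_cone_le coneC X_nontrivial Iy Iu))
    (cone_le_Mxy coneC _ Iu)).
have fu_ge : cone_le C ((mxy C (f y) u / Mxy C y u) *: u) (f u).
  rewrite mulrC -scalerA; apply: (cone_le_invZr coneC M0).
  exact: (cone_le_trans coneC (mxy_cone_le coneC X_nontrivial Ify Iu)
    (cone_le_f_scale Iu Iy M0 (cone_le_Mxy coneC y Iu))).
have fu_ge0 : 0 < mxy C (f y) u / Mxy C y u by rewrite divr_gt0.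
apply: le_trans (hilbert_le_ln coneC X_nontrivial (f_interior Iu) Iu fu_ge0 fu_ge fu_le) _.
rewrite /hilbert -lnM ?posrE ?divr_gt0 // le_eqVlt; apply/orP; left; apply/eqP.
by congr ln; field; rewrite !gt_eqF.
Qed.

End OrderPreservingMaps.

Section ConeSpectralRadius.
Variables (R : realType) (X : normedModType R) (C : set X) (f : X -> X) (kappa : R).
Hypotheses (coneC : closed_cone C) (X_nontrivial : exists v : X, v != 0).
Hypothesis kappa0 : 0 < kappa.
Hypothesis normalC : forall x y, cone_le C 0 x -> cone_le C x y -> `|x| <= kappa * `|y|.
Hypothesis C_nonempty : interior C !=set0.
Hypotheses (f_interior : forall y, interior C y -> interior C (f y))
  (f_mono : order_preserving C f) (f_hom : homogeneous C f).

Local Notation r := (fine (cone_spectral_radius C f)).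

(* Normality turns order bounds on the orbit of the reference point of
   cone_spectral_radius into norm bounds. *)
Lemma cone_spectral_radius_bounds v c D : interior C v -> 0 < c -> 0 < D ->
  cone_le C (c *: v) (f v) -> cone_le C (f v) (D *: v) -> c <= r <= D.
Proof.
move=> Iv c0 D0 cv_fv fv_Dv; set y := xget 0 (interior C).
have Iy : interior C y := xgetPex 0 C_nonempty.
have [a a0 av_y] := exists_scale_cone_le coneC Iv Iy.
have [b b0 y_bv] := exists_cone_le_scale coneC y Iv.
have v0 : 0 < `|v| by rewrite normr_gt0 (interior_neq0 coneC X_nontrivial).
rewrite /cone_spectral_radius -/y.
apply: (limsup_root_bounds (A := a * `|v| / kappa) (B := kappa * b * `|v|)) => // [||k|k].
- by rewrite !mulr_gt0 ?invr_gt0.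
- by rewrite !mulr_gt0.
- have ack : 0 <= a * c ^+ k by rewrite mulr_ge0 ?exprn_ge0 ?(ltW a0) ?(ltW c0).
  have := normal_cone_norm_le normalC (coneZ coneC ack (nbhs_singleton Iv))
    (cone_le_scale_iter coneC f_interior f_mono f_hom Iv Iy a0 c0 cv_fv av_y k).
  rewrite normrZ ger0_norm // => h; rewrite mulrAC ler_pdivrMr //; lra.
- have bDk : 0 <= b * D ^+ k by rewrite mulr_ge0 ?exprn_ge0 ?(ltW b0) ?(ltW D0).
  have := normal_cone_norm_le normalC (nbhs_singleton (iter_interior f_interior k Iy))
    (cone_le_iter_scale coneC f_interior f_mono f_hom Iv Iy b0 D0 fv_Dv y_bv k).
  by rewrite normrZ ger0_norm //; lra.
Qed.

Lemma cone_spectral_radius_gt0 : 0 < r.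
Proof.
have [y Iy] := C_nonempty.
have [c c0 cy_fy] := exists_scale_cone_le coneC Iy (f_interior Iy).
have [D D0 fy_Dy] := exists_cone_le_scale coneC (f y) Iy.
have /andP[cr _] := cone_spectral_radius_bounds Iy c0 D0 cy_fy fy_Dy.
exact: lt_le_trans cr.
Qed.

Lemma cone_spectral_radius_eigen u mu : interior C u -> 0 < mu -> f u = mu *: u -> r = mu.
Proof.
move=> Iu mu0 fu; have mu_u := cone_lexx coneC (nbhs_singleton (interiorZ coneC mu0 Iu)).
have /andP[mur rmu] : mu <= r <= mu.
  by apply: (cone_spectral_radius_bounds Iu mu0 mu0); rewrite fu.
exact/le_anti/andP.
Qed.

End ConeSpectralRadius.

(** * The orbit of x *)

Section Orbit.
Variables (R : realType) (X : normedModType R) (C : set X) (f : X -> X) (kappa : R).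
Variables (x u : X) (theta : R).
Hypotheses (coneC : closed_cone C) (kappa0 : 0 < kappa).
Hypothesis normalC : forall x y, cone_le C 0 x -> cone_le C x y -> `|x| <= kappa * `|y|.
Hypothesis C_nonempty : interior C !=set0.
Hypotheses (f_interior : forall y, interior C y -> interior C (f y))
  (f_mono : order_preserving C f) (f_hom : homogeneous C f).
Hypotheses (Ix : interior C x) (Iu : interior C u) (u_norm : `|u| = 1).
Hypothesis theta01 : 0 < theta < 1.

Let X_nontrivial : exists v : X, v != 0.
Proof. by exists u; rewrite -normr_eq0 u_norm oner_neq0. Qed.

Let theta0 : 0 < theta. Proof. by case/andP: theta01. Qed.

Let Iiter k : interior C (iter k f x). Proof. exact: iter_interior. Qed.

Local Notation r := (fine (cone_spectral_radius C f)).

Let Ir k : interior C ((r ^+ k)^-1 *: iter k f x).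
Proof.
apply: interiorZ => //; rewrite invr_gt0 exprn_gt0 //.
exact: (cone_spectral_radius_gt0 coneC X_nontrivial kappa0 normalC).
Qed.

Lemma hilbert_decay_eigenvector : geom_decay (fun k => hilbert C (iter k f x) u) theta ->
  f u = Mxy C (f u) u *: u.
Proof.
move=> dH; apply: (hilbert_le0_eq coneC X_nontrivial (f_interior Iu) Iu).
apply/ler_addgt0Pr => e e0; rewrite add0r.
have e2 : 0 < e / 2 by rewrite divr_gt0.
have [N _ hN] := geom_decay_near_le theta01 e2 dH.
apply: le_trans (hilbert_f_le coneC X_nontrivial f_interior f_mono f_hom (Iiter N) Iu) _.
by rewrite -iterS; have := hN N (leqnn N); have := hN N.+1 (leqnSn N); rewrite /=; lra.
Qed.

(* m(y_k/u)/mu^k increases and M(y_k/u)/mu^k decreases; lambda is the sup of the former. *)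
Lemma eigen_scale_between mu : 0 < mu -> f u = mu *: u ->
  exists2 lam, 0 < lam & forall k,
    mxy C (iter k f x) u / mu ^+ k <= lam <= Mxy C (iter k f x) u / mu ^+ k.
Proof.
move=> mu0 fu; pose p k := mxy C (iter k f x) u / mu ^+ k.
pose q k := Mxy C (iter k f x) u / mu ^+ k.
have m0 k := mxy_gt0 coneC X_nontrivial (Iiter k) Iu.
have M0 k := Mxy_gt0 coneC X_nontrivial (Iiter k) Iu.
have muk k : 0 < mu ^+ k := exprn_gt0 k mu0.
have p_incr : {homo p : i j / (i <= j)%N >-> i <= j}.
  apply/nondecreasing_seqP => k; rewrite /p exprSr ler_pdivlMr ?mulr_gt0 //.
  rewrite mulrA divfK ?lt0r_neq0 //; apply: (mxy_ge coneC X_nontrivial Iu); first exact: mulr_gt0.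
  rewrite -scalerA -fu iterS.
  exact: (cone_le_scale_f coneC f_mono f_hom Iu (Iiter k) (m0 k)
    (mxy_cone_le coneC X_nontrivial (Iiter k) Iu)).
have q_decr : {homo q : i j / (i <= j)%N >-> j <= i}.
  apply/nonincreasing_seqP => k; rewrite /q exprSr ler_pdivrMr ?mulr_gt0 //.
  rewrite mulrA divfK ?lt0r_neq0 //; apply: Mxy_le; first exact: mulr_gt0.
  rewrite -scalerA -fu iterS.
  exact: (cone_le_f_scale coneC f_mono f_hom Iu (Iiter k) (M0 k) (cone_le_Mxy coneC _ Iu)).
have p_le_q i j : p i <= q j.
  apply: le_trans (p_incr _ _ (leq_maxl i j)) (le_trans _ (q_decr _ _ (leq_maxr i j))).
  by rewrite ler_wpM2r ?invr_ge0 ?(ltW (muk _)) ?(mxy_le_Mxy coneC X_nontrivial).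
have ub_p : has_ubound (range p) by exists (q 0%N) => _ [i _ <-].
have p_le_sup k : p k <= sup (range p).
  by apply: sup_upper_bound; [split => //; exists (p 0%N), 0%N | exists k].
exists (sup (range p)) => [|k]; first by apply: lt_le_trans (p_le_sup 0%N); rewrite divr_gt0.
rewrite p_le_sup /=; apply: ge_sup => [|_ [i _ <-]]; [by exists (p 0%N), 0%N | exact: p_le_q].
Qed.

Lemma geom_decay_hilbert_thompson :
  geom_decay (fun k => hilbert C (iter k f x) u) theta ->
  exists2 lam, 0 < lam &
    geom_decay (fun k => thompson C ((r ^+ k)^-1 *: iter k f x) (lam *: u)) theta.
Proof.
move=> dH; have fu := hilbert_decay_eigenvector dH; set mu := Mxy C (f u) u in fu.
have mu0 : 0 < mu := Mxy_gt0 coneC X_nontrivial (f_interior Iu) Iu.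
have [lam lam0 between] := eigen_scale_between mu0 fu.
exists lam => //; apply: geom_decay_le dH => k.
rewrite (cone_spectral_radius_eigen coneC X_nontrivial kappa0 normalC C_nonempty
  f_interior f_mono f_hom Iu mu0 fu).
have m0 := mxy_gt0 coneC X_nontrivial (Iiter k) Iu.
have muk : 0 < (mu ^+ k)^-1 by rewrite invr_gt0 exprn_gt0.
have /andP[m_lam lam_M] := between k.
have -> : hilbert C (iter k f x) u =
    ln ((Mxy C (iter k f x) u / mu ^+ k) / (mxy C (iter k f x) u / mu ^+ k)).
  by rewrite /hilbert; congr ln; field; rewrite !gt_eqF ?exprn_gt0.
apply: (thompson_le_ln coneC X_nontrivial (interiorZ coneC muk (Iiter k)) Iu _ m_lam lam_M).
- by rewrite divr_gt0 ?exprn_gt0.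
- rewrite mulrC -scalerA.
  exact: (cone_leZ2l coneC (ltW muk) (mxy_cone_le coneC X_nontrivial (Iiter k) Iu)).
- rewrite mulrC -scalerA.
  exact: (cone_leZ2l coneC (ltW muk) (cone_le_Mxy coneC _ Iu)).
Qed.

Lemma geom_decay_thompson_norm lam : 0 < lam ->
  geom_decay (fun k => thompson C ((r ^+ k)^-1 *: iter k f x) (lam *: u)) theta ->
  geom_decay (fun k => `|(r ^+ k)^-1 *: iter k f x - lam *: u|) theta.
Proof.
move=> lam0 dT; apply: (geom_decay_bigO (c := (3 * kappa + 1) * lam) theta0 _ dT).
  by rewrite mulr_gt0 // addr_gt0 ?mulr_gt0.
have half : 0 < 2^-1 :> R by rewrite invr_gt0.
near=> k.
have := norm_sub_le_thompson coneC X_nontrivial kappa0 normalC (Ir k) (interiorZ coneC lam0 Iu).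
rewrite normrZ u_norm mulr1 gtr0_norm //; apply.
by near: k; apply: geom_decay_near_le dT.
Unshelve. all: by end_near. Qed.

Lemma geom_decay_norm_normalize lam : 0 < lam ->
  geom_decay (fun k => `|(r ^+ k)^-1 *: iter k f x - lam *: u|) theta ->
  geom_decay (fun k => `| `|iter k f x|^-1 *: iter k f x - u|) theta.
Proof.
move=> lam0 dN; apply: (geom_decay_bigO (c := 4 / lam) theta0 _ dN); first by rewrite divr_gt0.
have r0 := cone_spectral_radius_gt0 coneC X_nontrivial kappa0 normalC C_nonempty
  f_interior f_mono f_hom.
near=> k.
have rk0 : 0 < (r ^+ k)^-1 by rewrite invr_gt0 exprn_gt0.
rewrite -(normalizeZ (iter k f x) rk0).
apply: normalize_sub_le => //.
by near: k; apply: geom_decay_near_le dN => //; rewrite divr_gt0.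
Unshelve. all: by end_near. Qed.

Lemma geom_decay_normalize_hilbert :
  geom_decay (fun k => `| `|iter k f x|^-1 *: iter k f x - u|) theta ->
  geom_decay (fun k => hilbert C (iter k f x) u) theta.
Proof.
move=> dN; have [rho rho0 ballC] := interior_ball Iu.
apply: (geom_decay_bigO (c := 8 / rho) theta0 _ dN); first by rewrite divr_gt0.
near=> k; apply: (hilbert_le_normalize_sub coneC X_nontrivial (Iiter k) Iu rho0 ballC).
by near: k; apply: geom_decay_near_le dN => //; rewrite divr_gt0.
Unshelve. all: by end_near. Qed.

End Orbit.

Theorem mainTheorem6 (R : realType) (X : completeNormedModType R)
  (C : set X) (f : X -> X) (x u : X) (theta : R) :
  closed_cone C -> normal_cone C -> interior C !=set0 ->
  (forall y, interior C y -> interior C (f y)) ->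
  order_preserving C f -> homogeneous C f ->
  interior C x -> interior C u -> `|u| = 1 -> 0 < theta < 1 ->
  let r := fine (cone_spectral_radius C f) in
  [<-> (limsup_root (fun k => hilbert C (iter k f x) u)%R <= theta%:E)%E;
       exists2 lambda : R, 0 < lambda &
         (limsup_root (fun k => thompson C ((r ^+ k)^-1 *: iter k f x) (lambda *: u))%R
            <= theta%:E)%E;
       exists2 lambda : R, 0 < lambda &
         (limsup_root (fun k => `|(r ^+ k)^-1 *: iter k f x - lambda *: u|)%R
            <= theta%:E)%E;
       (limsup_root (fun k => `|(Num.norm (iter k f x))^-1 *: iter k f x - u|)%R <= theta%:E)%E].
Proof.
move=> coneC [kappa [kappa0 normalC]] C_nonempty f_int f_mono f_hom Ix Iu u_norm theta01 r.
have theta0 : 0 < theta by case/andP: theta01.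
have X_nontrivial : exists v : X, v != 0 by exists u; rewrite -normr_eq0 u_norm oner_neq0.
have r0 : 0 < r := cone_spectral_radius_gt0 coneC X_nontrivial kappa0 normalC C_nonempty
  f_int f_mono f_hom.
have hilbert0 k : 0 <= hilbert C (iter k f x) u.
  exact: (hilbert_ge0 coneC X_nontrivial (iter_interior f_int k Ix) Iu).
have thompson0 lam : 0 < lam -> forall k, 0 <= thompson C ((r ^+ k)^-1 *: iter k f x) (lam *: u).
  move=> lam0 k; apply: (thompson_ge0 coneC X_nontrivial _ (interiorZ coneC lam0 Iu)).
  by apply: (interiorZ coneC _ (iter_interior f_int k Ix)); rewrite invr_gt0 exprn_gt0.
have dHT := geom_decay_hilbert_thompson coneC kappa0 normalC C_nonempty f_int f_mono f_hom
  Ix Iu u_norm theta01.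
have dTN := geom_decay_thompson_norm coneC kappa0 normalC C_nonempty f_int f_mono f_hom
  Ix Iu u_norm theta01.
have dNU := geom_decay_norm_normalize coneC kappa0 normalC C_nonempty f_int f_mono f_hom
  u_norm theta01.
have dUH := geom_decay_normalize_hilbert coneC f_int Ix Iu u_norm theta01.
tfae.
- move=> /(limsup_rootP theta0 hilbert0)/dHT[lam lam0 dT].
  by exists lam => //; apply/(limsup_rootP theta0 (thompson0 _ lam0)).
- move=> [lam lam0 /(limsup_rootP theta0 (thompson0 _ lam0))/(dTN _ lam0) dN].
  by exists lam => //; apply/limsup_rootP => // k.
- move=> [lam lam0 /limsup_rootP-/(_ theta0 (fun k => normr_ge0 _))/(dNU x _ lam0) dU].
  by apply/limsup_rootP => // k.
- move=> /limsup_rootP-/(_ theta0 (fun k => normr_ge0 _))/dUH dH.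
  exact/(limsup_rootP theta0 hilbert0).
Qed.
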